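(* Let $n\ge 2$ and let $(W_r)_{r\in\mathbb Z}$ be a generalized $n$-step Fibonacci sequence. Then for every integer $r$ and every non-negative integer $k$, \[ \sum_{j=0}^k(-1)^jW_{r-k+j}+(n\bmod 2)\sum_{j=0}^k(-1)^jW_{r-k-n-1+j} =(-1)^k\sum_{j=1}^{\lceil n/2\rceil}W_{r-2j+1}+\sum_{j=1}^{\lceil n/2\rceil}W_{r-2j-k}. \]
   Context: Fix an integer $n\ge 2$. A generalized $n$-step Fibonacci sequence is a two-sided sequence $(W_r)_{r\in\mathbb Z}$ of complex numbers satisfying $W_r=\sum_{i=1}^n W_{r-i}$ for all $r\in\mathbb Z$. $\lceil q\rceil$ denotes the least integer $\ge q$, and $n\bmod 2\in\{0,1\}$. *)

From HB Require Import structures.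
From mathcomp Require Import all_boot all_order all_algebra.
Set Implicit Arguments. Unset Strict Implicit. Unset Printing Implicit Defensive.
Import Order.TTheory GRing.Theory Num.Theory.
Local Open Scope ring_scope.

Definition is_gen_fib (C : ringType) (n : nat) (W : int -> C) : Prop :=
  forall r : int, W r = \sum_(1 <= i < n.+1) W (r - i%:Z).

From HB Require Import structures.
From mathcomp Require Import all_boot all_order all_algebra.
From mathcomp Require Import zify.
Import Order.TTheory GRing.Theory Num.Theory.
Set Implicit Arguments. Unset Strict Implicit.
Local Open Scope ring_scope.

(* Let A t := W (t-1) + W (t-3) + ... + W (t - 2 ceil(n/2) + 1).  Merging A t and
   A (t-1) gives the first 2 ceil(n/2) lags of W at t, i.e. n lags when n is even
   and n + 1 lags when n is odd; by the recurrence this equals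
   g t := W t + (n mod 2) W (t-n-1).  The left-hand side of the identity is the
   alternating sum of g over [r-k, r], which telescopes to (-1)^k A r + A (r-k-1),
   the right-hand side. *)

Lemma alternating_sum_telescope (C : nzRingType) (f : int -> C) (m : int) (k : nat) :
  \sum_(0 <= j < k.+1) (-1) ^+ j * (f (m + j%:Z) + f (m + j%:Z - 1))
  = (-1) ^+ k * f (m + k%:Z) + f (m - 1).
Proof.
elim: k => [|k IH]; first by rewrite big_nat1 expr0 !mul1r !addr0 addrC.
rewrite big_nat_recr //= IH exprS mulN1r mulrDr addrAC.
have -> : m + k.+1%:Z - 1 = m + k%:Z by lia.
by rewrite !mulNr addrCA subrr addr0.
Qed.

Lemma sum_consecutive_pairs (C : nmodType) (F : nat -> C) (p : nat) :
  \sum_(1 <= j < p.+1) (F j.*2.-1 + F j.*2) = \sum_(1 <= i < p.*2.+1) F i.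
Proof.
elim: p => [|p IH]; first by rewrite !big_geq.
rewrite big_nat_recr //= IH doubleS (big_nat_recr p.*2.+2) //= (big_nat_recr p.*2.+1) //=.
by rewrite addrA.
Qed.

Lemma gen_fib_sum_double_uphalf (C : nzRingType) (n : nat) (W : int -> C) :
  is_gen_fib n W -> forall t : int,
  \sum_(1 <= i < (uphalf n).*2.+1) W (t - i%:Z) = W t + (odd n)%:R * W (t - n%:Z - 1).
Proof.
move=> hW t; have -> : (uphalf n).*2 = (n + odd n)%N.
  by rewrite uphalf_half doubleD; move: (odd_double_half n); case: (odd n); lia.
rewrite (hW t); case: (odd n); first by rewrite addn1 big_nat_recr //= mul1r; congr (_ + W _); lia.
by rewrite addn0 mul0r addr0.
Qed.

Definition odd_lag_sum (C : nzRingType) (n : nat) (W : int -> C) (t : int) : C :=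
  \sum_(1 <= j < (uphalf n).+1) W (t - 2 * j%:Z + 1).

Lemma gen_fib_odd_lag_sumD (C : nzRingType) (n : nat) (W : int -> C) :
  is_gen_fib n W -> forall t : int,
  odd_lag_sum n W t + odd_lag_sum n W (t - 1) = W t + (odd n)%:R * W (t - n%:Z - 1).
Proof.
move=> hW t; rewrite -gen_fib_sum_double_uphalf // -sum_consecutive_pairs -big_split.
by apply: eq_big_nat => j /andP[j_gt0 _]; congr (W _ + W _); lia.
Qed.

Theorem mainTheorem4 (C : numClosedFieldType) (n : nat) (hn : (2 <= n)%N)
  (W : int -> C) (hW : is_gen_fib n W) (r : int) (k : nat) :
  \sum_(0 <= j < k.+1) (-1) ^+ j * W (r - k%:Z + j%:Z)
  + (odd n)%:R * \sum_(0 <= j < k.+1) (-1) ^+ j * W (r - k%:Z - n%:Z - 1 + j%:Z)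
  = (-1) ^+ k * \sum_(1 <= j < (uphalf n).+1) W (r - 2 * j%:Z + 1)
    + \sum_(1 <= j < (uphalf n).+1) W (r - 2 * j%:Z - k%:Z).
Proof.
have -> : \sum_(1 <= j < (uphalf n).+1) W (r - 2 * j%:Z + 1)
          = odd_lag_sum n W (r - k%:Z + k%:Z) by rewrite subrK.
have -> : \sum_(1 <= j < (uphalf n).+1) W (r - 2 * j%:Z - k%:Z)
          = odd_lag_sum n W (r - k%:Z - 1).
  by apply: eq_bigr => j _; congr W; lia.
rewrite -alternating_sum_telescope mulr_sumr -big_split /=.
apply: eq_bigr => j _; rewrite mulrCA -mulrDr gen_fib_odd_lag_sumD //.
by congr (_ * (W _ + _ * W _)); lia.
Qed.
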